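(* Let $\mu\neq 0$ and $K$ be constants and set $\tau:=-K/\mu$. The non-constant solutions $\phi(b^2,s)$ of the system $$\phi_{22}=2(\phi_1-s\phi_{12}),\qquad -\mu b^2\left[\psi^2-(\psi_2+2s\psi_1)\right]+\mu s\psi+\mu=K\phi^2,\quad \psi:=\frac{\phi_2+2s\phi_1}{2\phi},$$ are given by $$\phi(u,v)=\frac{2q(u)\left(\sqrt{u+v^2}\pm v\right)^2}{\left[q(u)\left(\sqrt{u+v^2}\pm v\right)^2+p(u)\right]^2+\tau},\qquad u:=b^2-s^2,\ v:=s,$$ where the functions $p(u)$ and $q(u)$ satisfy $$uq^2p'+(p^2+\tau)q'=0,\qquad qp'-2pq'-uqq'-2q^2=0.$$
   Context: $\phi(b^2,s)$ is a smooth positive function; $\phi_1,\psi_1$ denote partial derivatives with respect to the first variable $b^2$, $\phi_2,\psi_2$ with respect to $s$, similarly $\phi_{12},\phi_{22}$; $p',q'$ denote derivatives with respect to $u$. *)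

From Stdlib Require Import Reals List.
From Coquelicot Require Import Coquelicot.
Open Scope R_scope.

(* Partial derivatives of a function phi(x, s) of two real variables,
   where x stands for b^2 (first variable) and s for the second variable. *)
Definition d1 (f : R -> R -> R) : R -> R -> R :=
  fun x s => Derive (fun y => f y s) x.
Definition d2 (f : R -> R -> R) : R -> R -> R :=
  fun x s => Derive (fun t => f x t) s.

Fixpoint pderiv (l : list bool) (f : R -> R -> R) : R -> R -> R :=
  match l with
  | nil => f
  | b :: l' => if b then d1 (pderiv l' f) else d2 (pderiv l' f)
  end.

(* The domain of (b^2, s): 0 < b^2 < b0^2 and |s| < b. *)
Definition dom (b0 x s : R) : Prop := 0 < x < b0 ^ 2 /\ s ^ 2 < x.

Definition smooth_on (b0 : R) (f : R -> R -> R) : Prop :=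
  forall (l : list bool) (x s : R), dom b0 x s ->
    ex_derive (fun y => pderiv l f y s) x /\
    ex_derive (fun t => pderiv l f x t) s /\
    continuous (fun z : R * R => pderiv l f (fst z) (snd z)) (x, s).

Definition psi_of (phi : R -> R -> R) : R -> R -> R :=
  fun x s => (d2 phi x s + 2 * s * d1 phi x s) / (2 * phi x s).

Definition pde_system (mu K : R) (phi : R -> R -> R) (x s : R) : Prop :=
  d2 (d2 phi) x s = 2 * (d1 phi x s - s * d2 (d1 phi) x s) /\
  (let psi := psi_of phi in
   - mu * x * ((psi x s) ^ 2 - (d2 psi x s + 2 * s * d1 psi x s))
   + mu * s * psi x s + mu = K * (phi x s) ^ 2).

Definition phi_formula (eps tau : R) (p q : R -> R) (u v : R) : R :=
  let w := (sqrt (u + v ^ 2) + eps * v) ^ 2 in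
  2 * q u * w / ((q u * w + p u) ^ 2 + tau).

(* Along a parabola x = u + s^2 (u = b^2 - s^2 fixed) put H(v) = phi(u + v^2, v) and
   Q(v) = psi(u + v^2, v).  Then H' = phi_2 + 2 v phi_1 = 2 Q H and Q' = psi_2 + 2 v psi_1, so the
   second equation of the system says exactly Q' = Q^2 + (-tau H^2 - 1 - v Q)/(u + v^2).
   This ODE has three first integrals, whence
     1/phi = a(u) (sqrt x + s)^2 + c(u) (sqrt x - s)^2 + p(u),
     4 a c u^2 - p^2 = tau,   p + u (a + c) = 1/f,   f(u) = phi(u, 0).
   On the axis s = 0 the first equation (phi_22 = 2 phi_1 there), the s-derivative of the
   second one and phi_12 = phi_21 determine f' and (psi(u,0))', and then
   a' = -2 a^2 f, c' = -2 c^2 f, p' = 4 a c u f.  So a vanishes nowhere unless it vanishes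
   identically, likewise c, and if both vanished p and hence phi would be constant.  With
   q = 2a (or q = 2c and s -> -s) the representation of 1/phi is the closed form, and the two
   relations between p and q are the equations for p', q' combined with the constraints. *)

From Stdlib Require Import Reals Lra Psatz Classical.
From Coquelicot Require Import Coquelicot.
Open Scope R_scope.

(* The first pattern matches the eta-expanded [Derive (fun x => f x)] left by [auto_derive]. *)
Ltac rewrite_derive Hd :=
  match type of Hd with is_derive ?f ?x ?l =>
    first [ replace (Derive (fun y : R => f y) x) with l
              by (symmetry; exact (is_derive_unique f x l Hd))
          | replace (Derive f x) with l by (symmetry; exact (is_derive_unique f x l Hd)) ]
  end.

(** * Calculus of one and two real variables *)

Lemma is_derive_zero_const (f : R -> R) (l r : R) :
  (forall t, l < t < r -> is_derive f t 0) ->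
  forall x y, l < x < r -> l < y < r -> f x = f y.
Proof.
  intros Hd x y Hx Hy.
  assert (Hin : forall t, Rmin x y <= t <= Rmax x y -> l < t < r).
  { intros t [Ht1 Ht2]. split.
    - apply Rlt_le_trans with (Rmin x y); [apply Rmin_glb_lt|]; lra.
    - apply Rle_lt_trans with (Rmax x y); [|apply Rmax_lub_lt]; lra. }
  destruct (MVT_gen f x y (fun _ => 0)) as [c [_ Hc]].
  - intros t Ht. apply Hd, Hin. lra.
  - intros t Ht. apply continuity_pt_filterlim, (ex_derive_continuous f).
    exists 0. apply Hd, Hin, Ht.
  - lra.
Qed.

Lemma ex_antiderivative (g : R -> R) (l r t0 : R) :
  (forall t, l < t < r -> continuous g t) -> l < t0 < r ->
  exists G : R -> R, forall t, l < t < r -> is_derive G t (g t).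
Proof.
  intros Hc Ht0. exists (fun t => RInt g t0 t). intros t Ht.
  apply (is_derive_RInt g _ t0 t); [|now apply Hc].
  assert (Hd : 0 < Rmin (t - l) (r - t)) by (apply Rmin_pos; lra).
  exists (mkposreal _ Hd). intros y Hy. cbn in Hy.
  unfold AbsRing_ball, abs, minus, plus, opp in Hy. cbn in Hy. apply Rabs_def2 in Hy.
  pose proof (Rmin_l (t - l) (r - t)). pose proof (Rmin_r (t - l) (r - t)).
  apply (RInt_correct g), ex_RInt_continuous. intros z [Hz1 Hz2]. apply Hc. split.
  - apply Rlt_le_trans with (Rmin t0 y); [apply Rmin_glb_lt|]; lra.
  - apply Rle_lt_trans with (Rmax t0 y); [|apply Rmax_lub_lt]; lra.
Qed.

(* [a exp(-G)] has zero derivative, [G] an antiderivative of [g]. *)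
Lemma linear_ode_zero_propagates (a g : R -> R) (l r : R) :
  (forall t, l < t < r -> is_derive a t (g t * a t)) ->
  (forall t, l < t < r -> continuous g t) ->
  forall t1 t2, l < t1 < r -> l < t2 < r -> a t1 = 0 -> a t2 = 0.
Proof.
  intros Ha Hg t1 t2 Ht1 Ht2 Ha1.
  destruct (ex_antiderivative g l r t1 Hg Ht1) as [G HG].
  assert (Hconst : forall t, l < t < r -> is_derive (fun t => a t * exp (- G t)) t 0).
  { intros t Ht. pose proof (Ha t Ht) as Hat. pose proof (HG t Ht) as HGt.
    auto_derive.
    - repeat split; eexists; eauto.
    - rewrite_derive Hat. rewrite_derive HGt. ring. }
  pose proof (is_derive_zero_const _ l r Hconst t2 t1 Ht2 Ht1) as E. cbv beta in E.
  rewrite Ha1, Rmult_0_l in E. pose proof (exp_pos (- G t2)). nra.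
Qed.

Lemma is_derive_linear_approx (f : R -> R) (y l : R) (eps : posreal) :
  is_derive f y l ->
  exists d : posreal, forall v, Rabs (v - y) < d -> Rabs (f v - f y - l * (v - y)) <= eps * Rabs (v - y).
Proof.
  intros [_ Hf]. destruct (Hf y (fun P HP => HP) eps) as [d Hd].
  exists d. intros v Hv. specialize (Hd v Hv).
  unfold norm, minus, plus, opp, scal in Hd. cbn in Hd.
  unfold abs, mult in Hd. cbn in Hd.
  replace (f v - f y - l * (v - y)) with (f v + - f y + - ((v + - y) * l)) by ring.
  replace (v - y) with (v + - y) by ring. exact Hd.
Qed.

Lemma differentiable_pt_lim_of_partials (f : R -> R -> R) (x y l2 : R) :
  locally_2d (fun u v => ex_derive (fun z => f z v) u) x y ->
  continuity_2d_pt (d1 f) x y ->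
  is_derive (fun v => f x v) y l2 ->
  differentiable_pt_lim f x y (d1 f x y) l2.
Proof.
  intros [d Hd] Hc H2 eps.
  assert (He2 : 0 < eps / 2) by (pose proof (cond_pos eps); lra).
  destruct (Hc (mkposreal _ He2)) as [dc Hdc].
  destruct (is_derive_linear_approx _ y l2 (mkposreal _ He2) H2) as [dy Hdy].
  cbn in Hdc, Hdy.
  assert (Hm : 0 < Rmin d (Rmin dc dy)) by (repeat apply Rmin_pos; apply cond_pos).
  exists (mkposreal _ Hm). cbn. intros u v Hu Hv.
  pose proof (Rmin_l d (Rmin dc dy)). pose proof (Rmin_r d (Rmin dc dy)).
  pose proof (Rmin_l dc dy). pose proof (Rmin_r dc dy).
  assert (Hx : Rabs (f u v - d1 f x y * u - (f x v - d1 f x y * x)) <= eps / 2 * Rabs (u - x)).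
  { apply (bounded_variation (fun z => f z v - d1 f x y * z) (fun z => d1 f z v - d1 f x y)).
    intros t Ht. split.
    - auto_derive; [apply Hd; lra | unfold d1; ring].
    - apply Rlt_le, Hdc; lra. }
  specialize (Hdy v ltac:(lra)).
  replace (f u v - f x y - (d1 f x y * (u - x) + l2 * (v - y)))
    with ((f u v - d1 f x y * u - (f x v - d1 f x y * x)) + (f x v - f x y - l2 * (v - y))) by ring.
  eapply Rle_trans; [apply Rabs_triang|].
  pose proof (Rmax_l (Rabs (u - x)) (Rabs (v - y))). pose proof (Rmax_r (Rabs (u - x)) (Rabs (v - y))).
  pose proof (cond_pos eps). nra.
Qed.

Lemma is_derive_comp_2d (f : R -> R -> R) (X Y : R -> R) (t lX lY l2 : R) :
  locally_2d (fun u v => ex_derive (fun z => f z v) u) (X t) (Y t) ->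
  continuity_2d_pt (d1 f) (X t) (Y t) ->
  is_derive (fun v => f (X t) v) (Y t) l2 ->
  is_derive X t lX -> is_derive Y t lY ->
  is_derive (fun t => f (X t) (Y t)) t (d1 f (X t) (Y t) * lX + l2 * lY).
Proof.
  intros Hd Hc H2 HX HY. apply is_derive_Reals.
  apply derivable_pt_lim_comp_2d; [apply differentiable_pt_lim_of_partials; auto| |];
    apply is_derive_Reals; auto.
Qed.

Lemma is_derive_along_parabola (g : R -> R -> R) (u v : R) :
  locally_2d (fun x s => ex_derive (fun z => g z s) x) (u + v ^ 2) v ->
  continuity_2d_pt (d1 g) (u + v ^ 2) v ->
  ex_derive (fun s => g (u + v ^ 2) s) v ->
  is_derive (fun w => g (u + w ^ 2) w) v (2 * v * d1 g (u + v ^ 2) v + d2 g (u + v ^ 2) v).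
Proof.
  intros Hd Hc [l2 H2].
  replace (d2 g (u + v ^ 2) v) with l2 by (symmetry; exact (is_derive_unique _ _ _ H2)).
  replace (2 * v * d1 g (u + v ^ 2) v + l2) with (d1 g (u + v ^ 2) v * (2 * v) + l2 * 1) by ring.
  apply (is_derive_comp_2d g (fun w => u + w ^ 2) (fun w => w)); auto.
  - auto_derive; [easy | ring].
  - auto_derive; [easy | ring].
Qed.

(** * First integrals along the parabolas *)

Lemma sqrt_pm_pos (w v : R) : v ^ 2 < w ->
  sqrt w * sqrt w = w /\ 0 < sqrt w + v /\ 0 < sqrt w - v.
Proof.
  intros Hvw.
  assert (Hw : 0 < w) by nra.
  pose proof (sqrt_sqrt w (Rlt_le _ _ Hw)). pose proof (sqrt_lt_R0 w Hw).
  repeat split; nra.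
Qed.

(* [energy] and [inv_coef (±1)] are the first integrals of the parabola ODE of the section
   [Characteristics]; [w] stands for [u + v^2]. *)
Definition energy (tau w h q : R) : R := 2 * (w * q ^ 2 - 1) / h + 2 * tau * h.

Definition inv_coef (eps tau w v h q : R) : R :=
  (/ h + energy tau w h q / 4 - eps * sqrt w * q / h) / (2 * (sqrt w + eps * v) ^ 2).

Lemma inv_decomposition (tau w v h q : R) : v ^ 2 < w -> h <> 0 ->
  / h = inv_coef 1 tau w v h q * (sqrt w + v) ^ 2
        + inv_coef (-1) tau w v h q * (sqrt w - v) ^ 2 - energy tau w h q / 4.
Proof.
  intros Hvw Hh. destruct (sqrt_pm_pos w v Hvw) as [Hb [Hp Hm]].
  unfold inv_coef. set (E := energy tau w h q). set (b := sqrt w) in *.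
  field. repeat split; lra.
Qed.

Section Characteristics.
Variables (tau u V : R) (H Q : R -> R).
Hypothesis u_pos : 0 < u.
Hypothesis char_ode : forall v, -V < v < V ->
  0 < H v /\ is_derive H v (2 * Q v * H v) /\
  is_derive Q v (Q v ^ 2 + (- tau * H v ^ 2 - 1 - v * Q v) / (u + v ^ 2)).

Lemma energy_first_integral v : -V < v < V ->
  is_derive (fun v => energy tau (u + v ^ 2) (H v) (Q v)) v 0.
Proof.
  intros Hv. destruct (char_ode v Hv) as [HH [HdH HdQ]].
  unfold energy. auto_derive.
  - repeat split; try (eexists; eauto); lra.
  - rewrite_derive HdH. rewrite_derive HdQ.
    field. split; nra.
Qed.

Lemma inv_coef_first_integral eps v : eps = 1 \/ eps = -1 -> -V < v < V ->
  is_derive (fun v => inv_coef eps tau (u + v ^ 2) v (H v) (Q v)) v 0.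
Proof.
  intros Heps Hv. destruct (char_ode v Hv) as [HH [HdH HdQ]].
  assert (Hvw : v ^ 2 < u + v ^ 2) by lra.
  destruct (sqrt_pm_pos _ _ Hvw) as [Hb [Hp Hm]].
  unfold inv_coef, energy. auto_derive; replace (u + v * (v * 1)) with (u + v ^ 2) by ring.
  - destruct Heps as [-> | ->]; repeat split; try (eexists; eauto; fail); nra.
  - rewrite_derive HdH. rewrite_derive HdQ.
    set (b := sqrt (u + v ^ 2)) in *. clearbody b.
    replace u with (b * b - v * v) by nra.
    destruct Heps as [-> | ->]; field; repeat split; nra.
Qed.

Lemma inv_char_decomposition v : -V < v < V ->
  / H v = inv_coef 1 tau u 0 (H 0) (Q 0) * (sqrt (u + v ^ 2) + v) ^ 2
          + inv_coef (-1) tau u 0 (H 0) (Q 0) * (sqrt (u + v ^ 2) - v) ^ 2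
          - energy tau u (H 0) (Q 0) / 4.
Proof.
  intros Hv.
  assert (Hconst : forall f : R -> R, (forall v, -V < v < V -> is_derive f v 0) -> f v = f 0)
    by (intros f Hf; apply (is_derive_zero_const f (-V) V Hf); lra).
  pose proof (Hconst _ energy_first_integral) as HE.
  pose proof (Hconst _ (fun v => inv_coef_first_integral 1 v (or_introl eq_refl))) as HA.
  pose proof (Hconst _ (fun v => inv_coef_first_integral (-1) v (or_intror eq_refl))) as HC.
  cbv beta in HE, HA, HC. replace (u + 0 ^ 2) with u in HE, HA, HC by ring.
  rewrite <- HE, <- HA, <- HC.
  apply inv_decomposition; [lra|]. apply Rgt_not_eq, char_ode, Hv.
Qed.
End Characteristics.

(** * The coefficients on the axis s = 0 *)

Lemma axis_constraints (tau u h q : R) : 0 < u -> 0 < h ->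
  4 * inv_coef 1 tau u 0 h q * inv_coef (-1) tau u 0 h q * u ^ 2 - (- energy tau u h q / 4) ^ 2 = tau /\
  - energy tau u h q / 4 + u * (inv_coef 1 tau u 0 h q + inv_coef (-1) tau u 0 h q) = / h.
Proof.
  intros Hu Hh. unfold inv_coef, energy.
  pose proof (sqrt_sqrt u (Rlt_le _ _ Hu)). pose proof (sqrt_lt_R0 u Hu).
  set (r := sqrt u) in *. clearbody r. subst u. split; field; lra.
Qed.

Section AxisFlow.
Variables (tau : R) (f Q : R -> R) (u : R).
Hypothesis u_pos : 0 < u.
Hypothesis f_pos : 0 < f u.
Hypothesis f_deriv : is_derive f u (f u * (3 * Q u ^ 2 - (tau * f u ^ 2 + 1) / u) / 2).
Hypothesis Q_deriv : is_derive Q u (Q u ^ 3 / 2 - Q u * (3 * tau * f u ^ 2 + 2) / (2 * u)).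

Lemma inv_coef_riccati eps : eps = 1 \/ eps = -1 ->
  is_derive (fun u => inv_coef eps tau u 0 (f u) (Q u)) u
    (-2 * inv_coef eps tau u 0 (f u) (Q u) ^ 2 * f u).
Proof.
  intros Heps. unfold inv_coef, energy. auto_derive.
  - destruct Heps as [-> | ->]; repeat split; try (eexists; eauto; fail); try lra;
      pose proof (sqrt_lt_R0 u u_pos); nra.
  - rewrite_derive f_deriv. rewrite_derive Q_deriv.
    pose proof (sqrt_sqrt u (Rlt_le _ _ u_pos)). pose proof (sqrt_lt_R0 u u_pos).
    set (r := sqrt u) in *. clearbody r. subst u.
    destruct Heps as [-> | ->]; field; lra.
Qed.

Lemma energy_axis_deriv :
  is_derive (fun u => - energy tau u (f u) (Q u) / 4) u
    (4 * inv_coef 1 tau u 0 (f u) (Q u) * inv_coef (-1) tau u 0 (f u) (Q u) * u * f u).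
Proof.
  unfold inv_coef, energy. auto_derive.
  - repeat split; try (eexists; eauto; fail); lra.
  - rewrite_derive f_deriv. rewrite_derive Q_deriv.
    pose proof (sqrt_sqrt u (Rlt_le _ _ u_pos)). pose proof (sqrt_lt_R0 u u_pos).
    set (r := sqrt u) in *. clearbody r. subst u. field. lra.
Qed.
End AxisFlow.

(* Read [f, F, P, X] as [phi, phi_1, phi_2, psi_1] on the line [x = u] and [M] as the mixed
   second derivative of [phi] at [(u, 0)]; the identity is the second equation with [psi_2]
   computed using the first one.  At [s = 0]
   it gives [F 0]; its [s]-derivative at [0], in which [M] appears with a nonzero coefficient,
   gives [X 0]. *)
Lemma axis_ode (tau u M : R) (f F P X : R -> R) :
  0 < u -> 0 < f 0 ->
  is_derive f 0 (P 0) -> is_derive F 0 M -> is_derive P 0 (2 * F 0) -> ex_derive X 0 ->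
  X 0 = M / (2 * f 0) - P 0 * F 0 / (2 * f 0 ^ 2) ->
  locally 0 (fun s =>
    2 * F s / f s - (P s + 2 * s * F s) * P s / (2 * f s ^ 2) + 2 * s * X s
    = ((P s + 2 * s * F s) / (2 * f s)) ^ 2
      + (- tau * f s ^ 2 - 1 - s * ((P s + 2 * s * F s) / (2 * f s))) / u) ->
  F 0 = f 0 * (3 * (P 0 / (2 * f 0)) ^ 2 - (tau * f 0 ^ 2 + 1) / u) / 2 /\
  X 0 = (P 0 / (2 * f 0)) ^ 3 / 2 - P 0 / (2 * f 0) * (3 * tau * f 0 ^ 2 + 2) / (2 * u).
Proof.
  intros Hu Hf Hdf HdF HdP [dX HdX] HX0 Hid.
  set (G := fun s => 2 * F s / f s - (P s + 2 * s * F s) * P s / (2 * f s ^ 2) + 2 * s * X s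
    - (((P s + 2 * s * F s) / (2 * f s)) ^ 2
       + (- tau * f s ^ 2 - 1 - s * ((P s + 2 * s * F s) / (2 * f s))) / u)).
  assert (HG0 : G 0 = 0) by (unfold G; rewrite (locally_singleton _ _ Hid); ring).
  assert (HF0 : F 0 = f 0 * (3 * (P 0 / (2 * f 0)) ^ 2 - (tau * f 0 ^ 2 + 1) / u) / 2).
  { apply Rminus_diag_uniq. transitivity (f 0 / 2 * G 0); [unfold G; field; lra|].
    rewrite HG0. ring. }
  split; [exact HF0|].
  assert (HdG0 : is_derive G 0 0).
  { apply (is_derive_ext_loc (fun _ => 0)); [|now auto_derive].
    apply (filter_imp _ _ (fun s Hs => eq_sym (Rminus_diag_eq _ _ Hs)) Hid). }
  set (q0 := P 0 / (2 * f 0)) in *.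
  assert (HdG : is_derive G 0
    (2 * M / f 0 - 5 * F 0 * P 0 / f 0 ^ 2 + P 0 ^ 3 / f 0 ^ 3 + 2 * X 0
     - 2 * q0 * (2 * F 0 / f 0 - P 0 ^ 2 / (2 * f 0 ^ 2)) + (2 * tau * f 0 * P 0 + q0) / u)).
  { unfold G. auto_derive.
    - repeat split; try (eexists; eauto; fail); nra.
    - rewrite_derive Hdf. rewrite_derive HdF. rewrite_derive HdP. unfold q0. field. nra. }
  pose proof (is_derive_unique _ _ _ HdG) as E. rewrite (is_derive_unique _ _ _ HdG0) in E.
  assert (HM : M = 2 * f 0 * X 0 + P 0 * F 0 / f 0) by (rewrite HX0; field; lra).
  rewrite HM, HF0 in E.
  apply Rminus_diag_uniq.
  match type of E with 0 = ?e => transitivity (e / 6); [unfold q0; field; nra | rewrite <- E; field] end.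
Qed.

(** * The domain and the algebra of the closed form *)

Lemma locally_2d_pos (g : R -> R -> R) (x s : R) :
  continuity_2d_pt g x s -> 0 < g x s -> locally_2d (fun u v => 0 < g u v) x s.
Proof.
  intros Hc Hg.
  apply (locally_2d_impl (fun u v => Rabs (g u v - g x s) < g x s)).
  - apply locally_2d_forall. intros u v Huv. apply Rabs_def2 in Huv. lra.
  - exact (Hc (mkposreal _ Hg)).
Qed.

Lemma dom_locally (b0 x s : R) : dom b0 x s -> locally_2d (dom b0) x s.
Proof.
  intros [[Hx Hxb] Hs].
  pose proof (locally_2d_pos (fun u _ => u) x s (continuity_2d_pt_id1 x s) Hx) as L1.
  pose proof (locally_2d_pos (fun u _ => b0 ^ 2 - u) x s
    (continuity_2d_pt_minus _ _ x s (continuity_2d_pt_const x s _) (continuity_2d_pt_id1 x s))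
    ltac:(cbv beta; lra)) as L2.
  pose proof (locally_2d_pos (fun u v => u - v * v) x s
    (continuity_2d_pt_minus _ _ x s (continuity_2d_pt_id1 x s)
       (continuity_2d_pt_mult _ _ x s (continuity_2d_pt_id2 x s) (continuity_2d_pt_id2 x s)))
    ltac:(cbv beta; nra)) as L3.
  cbv beta in L1, L2, L3.
  refine (locally_2d_impl _ _ x s (locally_2d_forall _ x s _)
            (locally_2d_and _ _ x s L1 (locally_2d_and _ _ x s L2 L3))).
  cbv beta. intros u v (H1 & H2 & H3). unfold dom. split; [split|]; nra.
Qed.

Lemma dom_parabola (b0 u v : R) :
  0 < u < b0 ^ 2 -> - sqrt (b0 ^ 2 - u) < v < sqrt (b0 ^ 2 - u) -> dom b0 (u + v ^ 2) v.
Proof.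
  intros Hu Hv.
  pose proof (sqrt_sqrt (b0 ^ 2 - u) ltac:(lra)). pose proof (sqrt_lt_R0 (b0 ^ 2 - u) ltac:(lra)).
  unfold dom. split; [split|]; nra.
Qed.

Lemma dom_axis (b0 u : R) : 0 < u < b0 ^ 2 -> dom b0 u 0.
Proof. intros Hu. unfold dom. split; [lra | nra]. Qed.

Lemma dom_u_range (b0 x s : R) : dom b0 x s -> 0 < x - s ^ 2 < b0 ^ 2.
Proof. intros [[Hx Hxb] Hs]. split; nra. Qed.

Lemma phi_formula_of_inv (a c p b t tau F : R) :
  0 < b + t -> a <> 0 -> 0 < F ->
  4 * a * c * (b * b - t * t) ^ 2 - p ^ 2 = tau ->
  / F = a * (b + t) ^ 2 + c * (b - t) ^ 2 + p ->
  F = 2 * (2 * a) * (b + t) ^ 2 / ((2 * a * (b + t) ^ 2 + p) ^ 2 + tau).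
Proof.
  intros Hbt Ha HF Htau HinvF.
  assert (Hden : (2 * a * (b + t) ^ 2 + p) ^ 2 + tau = 4 * a * (b + t) ^ 2 * / F)
    by (rewrite HinvF, <- Htau; ring).
  rewrite Hden. field. repeat split; nra.
Qed.

Lemma pq_ode_of_constraints (a c p f u tau : R) :
  0 < f -> 4 * a * c * u ^ 2 - p ^ 2 = tau -> p + u * (a + c) = / f ->
  u * (2 * a) ^ 2 * (4 * a * c * u * f) + (p ^ 2 + tau) * (2 * (-2 * a ^ 2 * f)) = 0 /\
  2 * a * (4 * a * c * u * f) - 2 * p * (2 * (-2 * a ^ 2 * f))
    - u * (2 * a) * (2 * (-2 * a ^ 2 * f)) - 2 * (2 * a) ^ 2 = 0.
Proof.
  intros Hf Htau Hsum. rewrite <- Htau. split; [ring|].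
  transitivity (8 * a ^ 2 * (f * (p + u * (a + c)) - 1)); [ring|].
  rewrite Hsum. field. lra.
Qed.

(* With [tau] fixed, the closed form uses [p = axis_offset tau phi] and
   [q = 2 * axis_coef tau phi eps]. *)
Definition axis_coef (tau : R) (phi : R -> R -> R) (eps u : R) : R :=
  inv_coef eps tau u 0 (phi u 0) (psi_of phi u 0).

Definition axis_offset (tau : R) (phi : R -> R -> R) (u : R) : R :=
  - energy tau u (phi u 0) (psi_of phi u 0) / 4.

Definition psi_d1 (phi : R -> R -> R) (x s : R) : R :=
  (d1 (d2 phi) x s + 2 * s * d1 (d1 phi) x s) / (2 * phi x s)
  - (d2 phi x s + 2 * s * d1 phi x s) * d1 phi x s / (2 * phi x s ^ 2).

Section PDE.
Variables (mu K b0 : R) (phi : R -> R -> R).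
Hypothesis mu_neq0 : mu <> 0.
Hypothesis phi_smooth : smooth_on b0 phi.
Hypothesis phi_pos : forall x s, dom b0 x s -> 0 < phi x s.
Hypothesis phi_pde : forall x s, dom b0 x s -> pde_system mu K phi x s.

Local Notation tau := (- K / mu).
Local Notation psi := (psi_of phi).
Local Notation coef := (axis_coef tau phi).
Local Notation offset := (axis_offset tau phi).

Lemma phi_ex_derive1 l x s : dom b0 x s -> ex_derive (fun y => pderiv l phi y s) x.
Proof. intros Hd. apply (phi_smooth l x s Hd). Qed.

Lemma phi_ex_derive2 l x s : dom b0 x s -> ex_derive (fun t => pderiv l phi x t) s.
Proof. intros Hd. apply (phi_smooth l x s Hd). Qed.

Lemma phi_continuous l x s : dom b0 x s -> continuity_2d_pt (pderiv l phi) x s.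
Proof. intros Hd. apply continuity_2d_pt_filterlim, (phi_smooth l x s Hd). Qed.

Lemma phi_locally_ex_derive1 l x s : dom b0 x s ->
  locally_2d (fun x' s' => ex_derive (fun y => pderiv l phi y s') x') x s.
Proof.
  intros Hd. apply (locally_2d_impl (dom b0)); [|now apply dom_locally].
  apply locally_2d_forall. intros. now apply phi_ex_derive1.
Qed.

Lemma phi_mixed_partials x s : dom b0 x s -> d1 (d2 phi) x s = d2 (d1 phi) x s.
Proof.
  intros Hd. apply Schwarz.
  - apply (locally_2d_impl (dom b0)); [|now apply dom_locally].
    apply locally_2d_forall. intros u v Huv. repeat split.
    + exact (phi_ex_derive1 nil u v Huv).
    + exact (phi_ex_derive2 nil u v Huv).
    + exact (phi_ex_derive1 (false :: nil) u v Huv).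
    + exact (phi_ex_derive2 (true :: nil) u v Huv).
  - exact (phi_continuous (true :: false :: nil) x s Hd).
  - exact (phi_continuous (false :: true :: nil) x s Hd).
Qed.

Lemma psi_is_derive1 x s : dom b0 x s -> is_derive (fun y => psi y s) x (psi_d1 phi x s).
Proof.
  intros Hd. pose proof (phi_pos x s Hd).
  unfold psi_of, psi_d1. auto_derive.
  - repeat split; try nra.
    + exact (phi_ex_derive1 (false :: nil) x s Hd).
    + exact (phi_ex_derive1 (true :: nil) x s Hd).
    + exact (phi_ex_derive1 nil x s Hd).
  - unfold d1. field. lra.
Qed.

Lemma psi_is_derive2 x s : dom b0 x s ->
  is_derive (fun t => psi x t) s
    (2 * d1 phi x s / phi x s - (d2 phi x s + 2 * s * d1 phi x s) * d2 phi x s / (2 * phi x s ^ 2)).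
Proof.
  intros Hd. pose proof (phi_pos x s Hd). destruct (phi_pde x s Hd) as [Hpde1 _].
  unfold psi_of. auto_derive.
  - repeat split; try nra.
    + exact (phi_ex_derive2 (false :: nil) x s Hd).
    + exact (phi_ex_derive2 (true :: nil) x s Hd).
    + exact (phi_ex_derive2 nil x s Hd).
  - change (Derive (fun t => d2 phi x t) s) with (d2 (d2 phi) x s).
    change (Derive (fun t => d1 phi x t) s) with (d2 (d1 phi) x s).
    change (Derive (fun t => phi x t) s) with (d2 phi x s).
    rewrite Hpde1. field. lra.
Qed.

Lemma psi_d1_continuous x s : dom b0 x s -> continuity_2d_pt (psi_d1 phi) x s.
Proof.
  intros Hd. pose proof (phi_pos x s Hd).
  unfold psi_d1, Rdiv. cbn [pow].
  repeat first
    [ apply continuity_2d_pt_plus | apply continuity_2d_pt_minus | apply continuity_2d_pt_mult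
    | apply continuity_2d_pt_opp | apply continuity_2d_pt_inv | apply continuity_2d_pt_const
    | apply continuity_2d_pt_id2 ].
  all: try nra.
  all: first [ exact (phi_continuous nil x s Hd) | exact (phi_continuous (true :: nil) x s Hd)
             | exact (phi_continuous (false :: nil) x s Hd)
             | exact (phi_continuous (true :: true :: nil) x s Hd)
             | exact (phi_continuous (true :: false :: nil) x s Hd) ].
Qed.

Lemma psi_transport x s : dom b0 x s ->
  d2 psi x s + 2 * s * d1 psi x s = psi x s ^ 2 + (- tau * phi x s ^ 2 - 1 - s * psi x s) / x.
Proof.
  intros Hd. destruct (phi_pde x s Hd) as [_ Hpde2]. cbv zeta in Hpde2.
  destruct Hd as [[Hx _] _].
  apply Rminus_diag_uniq.
  match type of Hpde2 with ?l = ?r => transitivity ((l - r) / (mu * x)) end.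
  - field. lra.
  - rewrite Hpde2. field. lra.
Qed.

Lemma psi_axis_identity x s : dom b0 x s ->
  2 * d1 phi x s / phi x s - (d2 phi x s + 2 * s * d1 phi x s) * d2 phi x s / (2 * phi x s ^ 2)
  + 2 * s * psi_d1 phi x s
  = psi x s ^ 2 + (- tau * phi x s ^ 2 - 1 - s * psi x s) / x.
Proof.
  intros Hd. rewrite <- (psi_transport x s Hd). f_equal.
  - symmetry. exact (is_derive_unique _ _ _ (psi_is_derive2 x s Hd)).
  - f_equal. symmetry. exact (is_derive_unique _ _ _ (psi_is_derive1 x s Hd)).
Qed.

Lemma char_ode u v : dom b0 (u + v ^ 2) v ->
  0 < phi (u + v ^ 2) v /\
  is_derive (fun w => phi (u + w ^ 2) w) v (2 * psi (u + v ^ 2) v * phi (u + v ^ 2) v) /\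
  is_derive (fun w => psi (u + w ^ 2) w) v
    (psi (u + v ^ 2) v ^ 2 + (- tau * phi (u + v ^ 2) v ^ 2 - 1 - v * psi (u + v ^ 2) v) / (u + v ^ 2)).
Proof.
  intros Hd. pose proof (phi_pos _ _ Hd) as Hpos.
  pose proof (dom_locally _ _ _ Hd) as Hloc.
  split; [exact Hpos | split].
  - replace (2 * psi (u + v ^ 2) v * phi (u + v ^ 2) v)
      with (2 * v * d1 phi (u + v ^ 2) v + d2 phi (u + v ^ 2) v) by (unfold psi_of; field; lra).
    apply is_derive_along_parabola.
    + exact (phi_locally_ex_derive1 nil _ _ Hd).
    + exact (phi_continuous (true :: nil) _ _ Hd).
    + exact (phi_ex_derive2 nil _ _ Hd).
  - rewrite <- (psi_transport _ _ Hd), Rplus_comm.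
    apply is_derive_along_parabola.
    + apply (locally_2d_impl (dom b0)); [|exact Hloc].
      apply locally_2d_forall. intros x s Hxs. eexists. exact (psi_is_derive1 x s Hxs).
    + apply (continuity_2d_pt_ext_loc (psi_d1 phi)); [|exact (psi_d1_continuous _ _ Hd)].
      apply (locally_2d_impl (dom b0)); [|exact Hloc].
      apply locally_2d_forall. intros x s Hxs. symmetry.
      exact (is_derive_unique _ _ _ (psi_is_derive1 x s Hxs)).
    + eexists. exact (psi_is_derive2 _ _ Hd).
Qed.

Lemma inv_phi_repr x s : dom b0 x s ->
  / phi x s = coef 1 (x - s ^ 2) * (sqrt x + s) ^ 2 + coef (-1) (x - s ^ 2) * (sqrt x - s) ^ 2
              + offset (x - s ^ 2).
Proof.
  intros Hd. set (u := x - s ^ 2).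
  destruct Hd as [[Hx Hxb] Hsx].
  assert (Hu : 0 < u < b0 ^ 2) by (unfold u; split; nra).
  assert (Hs : - sqrt (b0 ^ 2 - u) < s < sqrt (b0 ^ 2 - u)).
  { pose proof (sqrt_sqrt (b0 ^ 2 - u) ltac:(lra)). pose proof (sqrt_lt_R0 (b0 ^ 2 - u) ltac:(lra)).
    unfold u in *. split; nra. }
  pose proof (inv_char_decomposition tau u (sqrt (b0 ^ 2 - u))
    (fun v => phi (u + v ^ 2) v) (fun v => psi (u + v ^ 2) v) (proj1 Hu)
    (fun v Hv => char_ode u v (dom_parabola b0 u v Hu Hv)) s Hs) as E.
  cbv beta in E. replace (u + 0 ^ 2) with u in E by ring.
  replace (u + s ^ 2) with x in E by (unfold u; ring).
  rewrite E. unfold axis_coef, axis_offset. unfold Rdiv. ring.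
Qed.

Lemma axis_derivs u : 0 < u < b0 ^ 2 ->
  is_derive (fun u => phi u 0) u (phi u 0 * (3 * psi u 0 ^ 2 - (tau * phi u 0 ^ 2 + 1) / u) / 2) /\
  is_derive (fun u => psi u 0) u (psi u 0 ^ 3 / 2 - psi u 0 * (3 * tau * phi u 0 ^ 2 + 2) / (2 * u)).
Proof.
  intros Hu.
  pose proof (dom_axis b0 u Hu) as Hd0.
  pose proof (phi_pos u 0 Hd0) as Hpos.
  destruct (phi_pde u 0 Hd0) as [Hpde1 _].
  destruct (axis_ode tau u (d1 (d2 phi) u 0) (fun s => phi u s) (fun s => d1 phi u s)
              (fun s => d2 phi u s) (fun s => psi_d1 phi u s)) as [HF HX].
  - lra.
  - exact Hpos.
  - exact (Derive_correct _ _ (phi_ex_derive2 nil u 0 Hd0)).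
  - rewrite (phi_mixed_partials u 0 Hd0).
    exact (Derive_correct _ _ (phi_ex_derive2 (true :: nil) u 0 Hd0)).
  - replace (2 * d1 phi u 0) with (d2 (d2 phi) u 0) by (rewrite Hpde1; ring).
    exact (Derive_correct _ _ (phi_ex_derive2 (false :: nil) u 0 Hd0)).
  - unfold psi_d1. auto_derive. repeat split; try nra;
      first [ exact (phi_ex_derive2 nil u 0 Hd0) | exact (phi_ex_derive2 (true :: nil) u 0 Hd0)
               | exact (phi_ex_derive2 (false :: nil) u 0 Hd0)
               | exact (phi_ex_derive2 (true :: true :: nil) u 0 Hd0)
               | exact (phi_ex_derive2 (true :: false :: nil) u 0 Hd0) ].
  - unfold psi_d1. field. lra.
  - apply (filter_imp (fun s => dom b0 u s)).
    + intros s Hs. exact (psi_axis_identity u s Hs).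
    + exact (locally_2d_1d_const_x _ _ _ (dom_locally _ _ _ Hd0)).
  - cbv beta in HF, HX.
    replace (psi u 0) with (d2 phi u 0 / (2 * phi u 0)) by (unfold psi_of; field; lra).
    split.
    + rewrite <- HF. exact (Derive_correct _ _ (phi_ex_derive1 nil u 0 Hd0)).
    + rewrite <- HX. exact (psi_is_derive1 u 0 Hd0).
Qed.

Lemma coef_riccati eps u : eps = 1 \/ eps = -1 -> 0 < u < b0 ^ 2 ->
  is_derive (coef eps) u (-2 * coef eps u ^ 2 * phi u 0).
Proof.
  intros Heps Hu. destruct (axis_derivs u Hu) as [Hf HQ].
  pose proof (dom_axis b0 u Hu) as Hd0.
  exact (inv_coef_riccati tau (fun u => phi u 0) (fun u => psi u 0) u (proj1 Hu)
           (phi_pos u 0 Hd0) Hf HQ eps Heps).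
Qed.

Lemma offset_deriv u : 0 < u < b0 ^ 2 ->
  is_derive offset u (4 * coef 1 u * coef (-1) u * u * phi u 0).
Proof.
  intros Hu. destruct (axis_derivs u Hu) as [Hf HQ].
  pose proof (dom_axis b0 u Hu) as Hd0.
  exact (energy_axis_deriv tau (fun u => phi u 0) (fun u => psi u 0) u (proj1 Hu)
           (phi_pos u 0 Hd0) Hf HQ).
Qed.

Lemma coef_constraints u : 0 < u < b0 ^ 2 ->
  4 * coef 1 u * coef (-1) u * u ^ 2 - offset u ^ 2 = tau /\
  offset u + u * (coef 1 u + coef (-1) u) = / phi u 0.
Proof.
  intros Hu. pose proof (dom_axis b0 u Hu) as Hd0.
  exact (axis_constraints tau u (phi u 0) (psi u 0) (proj1 Hu) (phi_pos u 0 Hd0)).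
Qed.

Lemma coef_pair eps u : eps = 1 \/ eps = -1 ->
  coef eps u * coef (- eps) u = coef 1 u * coef (-1) u /\
  coef eps u + coef (- eps) u = coef 1 u + coef (-1) u.
Proof.
  intros [-> | ->]; [change (Ropp 1) with (-1) | replace (Ropp (-1)) with 1 by ring];
    split; ring.
Qed.

Lemma coef_vanishes_identically eps u1 : eps = 1 \/ eps = -1 -> 0 < u1 < b0 ^ 2 ->
  coef eps u1 = 0 -> forall u, 0 < u < b0 ^ 2 -> coef eps u = 0.
Proof.
  intros Heps Hu1 Hzero u Hu.
  apply (linear_ode_zero_propagates (coef eps) (fun u => -2 * coef eps u * phi u 0) 0 (b0 ^ 2))
    with (t1 := u1); auto.
  - intros t Ht. replace (-2 * coef eps t * phi t 0 * coef eps t) with (-2 * coef eps t ^ 2 * phi t 0)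
      by ring. now apply coef_riccati.
  - intros t Ht. apply (ex_derive_continuous (fun u => -2 * coef eps u * phi u 0)).
    apply ex_derive_mult; [apply ex_derive_mult; [apply ex_derive_const|] |].
    + eexists. now apply coef_riccati.
    + eexists. exact (proj1 (axis_derivs t Ht)).
Qed.

Lemma coef_nonvanishing :
  (exists x1 s1 x2 s2, dom b0 x1 s1 /\ dom b0 x2 s2 /\ phi x1 s1 <> phi x2 s2) ->
  exists eps, (eps = 1 \/ eps = -1) /\ forall u, 0 < u < b0 ^ 2 -> coef eps u <> 0.
Proof.
  intros (x1 & s1 & x2 & s2 & Hd1 & Hd2 & Hne).
  destruct (classic (exists u, 0 < u < b0 ^ 2 /\ coef 1 u = 0)) as [[u1 [Hu1 Ha1]] | Hno].
  2: { exists 1. split; [now left|]. intros u Hu Hz. apply Hno. now exists u. }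
  destruct (classic (exists u, 0 < u < b0 ^ 2 /\ coef (-1) u = 0)) as [[u2 [Hu2 Hc2]] | Hno].
  2: { exists (-1). split; [now right|]. intros u Hu Hz. apply Hno. now exists u. }
  exfalso. apply Hne.
  pose proof (coef_vanishes_identically 1 u1 (or_introl eq_refl) Hu1 Ha1) as Ha.
  pose proof (coef_vanishes_identically (-1) u2 (or_intror eq_refl) Hu2 Hc2) as Hc.
  assert (Hp : offset (x1 - s1 ^ 2) = offset (x2 - s2 ^ 2)).
  { apply (is_derive_zero_const offset 0 (b0 ^ 2)); [|now apply (dom_u_range b0)..].
    intros t Ht. pose proof (offset_deriv t Ht) as Hd. rewrite (Ha t Ht) in Hd.
    replace (4 * 0 * coef (-1) t * t * phi t 0) with 0 in Hd by ring. exact Hd. }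
  apply Rinv_eq_reg.
  rewrite (inv_phi_repr x1 s1 Hd1), (inv_phi_repr x2 s2 Hd2), Hp.
  rewrite !Ha, !Hc by now apply (dom_u_range b0). ring.
Qed.

Lemma inv_phi_repr_eps eps x s : eps = 1 \/ eps = -1 -> dom b0 x s ->
  / phi x s = coef eps (x - s ^ 2) * (sqrt x + eps * s) ^ 2
              + coef (- eps) (x - s ^ 2) * (sqrt x - eps * s) ^ 2 + offset (x - s ^ 2).
Proof.
  intros Heps Hd. rewrite (inv_phi_repr x s Hd).
  destruct Heps as [-> | ->]; [change (Ropp 1) with (-1) | replace (Ropp (-1)) with 1 by ring]; ring.
Qed.

Lemma q_is_derive eps u : eps = 1 \/ eps = -1 -> 0 < u < b0 ^ 2 ->
  is_derive (fun u => 2 * coef eps u) u (2 * (-2 * coef eps u ^ 2 * phi u 0)).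
Proof.
  intros Heps Hu. pose proof (coef_riccati eps u Heps Hu) as Hd.
  auto_derive; [now exists (-2 * coef eps u ^ 2 * phi u 0) | rewrite_derive Hd; ring].
Qed.

Lemma pq_ode eps u : eps = 1 \/ eps = -1 -> 0 < u < b0 ^ 2 ->
  u * (2 * coef eps u) ^ 2 * Derive offset u
    + (offset u ^ 2 + tau) * Derive (fun u => 2 * coef eps u) u = 0 /\
  2 * coef eps u * Derive offset u - 2 * offset u * Derive (fun u => 2 * coef eps u) u
    - u * (2 * coef eps u) * Derive (fun u => 2 * coef eps u) u - 2 * (2 * coef eps u) ^ 2 = 0.
Proof.
  intros Heps Hu.
  rewrite (is_derive_unique _ _ _ (offset_deriv u Hu)).
  replace (Derive (fun u => 2 * coef eps u) u) with (2 * (-2 * coef eps u ^ 2 * phi u 0))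
    by (symmetry; exact (is_derive_unique _ _ _ (q_is_derive eps u Heps Hu))).
  destruct (coef_constraints u Hu) as [C1 C2]. destruct (coef_pair eps u Heps) as [P1 P2].
  replace (4 * coef 1 u * coef (-1) u * u * phi u 0)
    with (4 * coef eps u * coef (- eps) u * u * phi u 0)
    by (transitivity (4 * (coef 1 u * coef (-1) u) * u * phi u 0); [rewrite <- P1 |]; ring).
  apply (pq_ode_of_constraints _ (coef (- eps) u)).
  - exact (phi_pos u 0 (dom_axis b0 u Hu)).
  - etransitivity; [| exact C1].
    transitivity (4 * (coef 1 u * coef (-1) u) * u ^ 2 - offset u ^ 2); [rewrite <- P1 |]; ring.
  - rewrite P2. exact C2.
Qed.

Lemma phi_closed_form_at eps x s : eps = 1 \/ eps = -1 ->
  (forall u, 0 < u < b0 ^ 2 -> coef eps u <> 0) -> dom b0 x s ->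
  phi x s = phi_formula eps tau offset (fun u => 2 * coef eps u) (x - s ^ 2) s.
Proof.
  intros Heps Hne Hd. unfold phi_formula. cbv zeta.
  replace (x - s ^ 2 + s ^ 2) with x by ring.
  destruct (dom_u_range b0 x s Hd) as [Hu1 Hu2].
  destruct (coef_constraints (x - s ^ 2) (conj Hu1 Hu2)) as [C1 _].
  destruct (coef_pair eps (x - s ^ 2) Heps) as [P1 _].
  assert (Hs2 : (eps * s) ^ 2 < x) by (destruct Heps as [-> | ->]; destruct Hd; nra).
  destruct (sqrt_pm_pos x (eps * s) Hs2) as [Hxx [Hp _]].
  apply (phi_formula_of_inv _ (coef (- eps) (x - s ^ 2))).
  - exact Hp.
  - apply Hne. now split.
  - now apply phi_pos.
  - rewrite Hxx. etransitivity; [| exact C1].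
    transitivity (4 * (coef eps (x - s ^ 2) * coef (- eps) (x - s ^ 2)) * (x - s ^ 2) ^ 2
                  - offset (x - s ^ 2) ^ 2); [destruct Heps as [-> | ->] | rewrite P1]; ring.
  - now apply inv_phi_repr_eps.
Qed.
End PDE.

Theorem lemma7p2 (mu K b0 : R) (phi : R -> R -> R) :
  mu <> 0 -> 0 < b0 ->
  smooth_on b0 phi ->
  (forall x s, dom b0 x s -> 0 < phi x s) ->
  (forall x s, dom b0 x s -> pde_system mu K phi x s) ->
  (exists x1 s1 x2 s2, dom b0 x1 s1 /\ dom b0 x2 s2 /\ phi x1 s1 <> phi x2 s2) ->
  let tau := - K / mu in
  exists (eps : R) (p q : R -> R),
    (eps = 1 \/ eps = -1) /\
    (forall u, 0 < u < b0 ^ 2 -> ex_derive p u /\ ex_derive q u) /\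
    (forall u, 0 < u < b0 ^ 2 ->
        u * (q u) ^ 2 * Derive p u + ((p u) ^ 2 + tau) * Derive q u = 0 /\
        q u * Derive p u - 2 * p u * Derive q u - u * q u * Derive q u
          - 2 * (q u) ^ 2 = 0) /\
    (forall x s, dom b0 x s -> phi x s = phi_formula eps tau p q (x - s ^ 2) s).
Proof.
  intros Hmu _ Hsmooth Hpos Hpde Hnonconst tau.
  destruct (coef_nonvanishing mu K b0 phi Hmu Hsmooth Hpos Hpde Hnonconst) as (eps & Heps & Hne).
  exists eps, (axis_offset tau phi), (fun u => 2 * axis_coef tau phi eps u).
  split; [exact Heps | split; [| split]].
  - intros u Hu. split; eexists; [eapply offset_deriv | eapply q_is_derive]; eauto.
  - intros u Hu. eapply pq_ode; eauto.
  - intros x s Hd. eapply phi_closed_form_at; eauto.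
Qed.
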